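(* Let $d\ge1$. As a multigraded vector space, the square $F_d(\mathfrak B)^2$ of the free bicommutative algebra is isomorphic to $\omega(K[Y_d])\otimes\omega(K[Z_d])$, where $\omega$ denotes the augmentation ideal (polynomials without constant term) and both $y_i$ and $z_i$ are given degree $1$ in the $i$-th grading. As a $GL_d$-module, $F_d(\mathfrak B)^2\cong\bigoplus_{p,q\ge 1}W_d(p)\otimes W_d(q)$.
   Context: $K$ is a field of characteristic $0$. $\mathfrak B$ is the variety of bicommutative algebras (identities $(x_1x_2)x_3=(x_1x_3)x_2$ and $x_1(x_2x_3)=x_2(x_1x_3)$); $F_d(\mathfrak B)$ is its free algebra on $x_1,\dots,x_d$, multigraded by the degrees in each $x_i$. $GL_d$ acts on $F_d(\mathfrak B)$ by extending its natural action on $\mathrm{span}(x_1,\dots,x_d)$ to algebra automorphisms. $K[Y_d]=K[y_1,\dots,y_d]$, $K[Z_d]=K[z_1,\dots,z_d]$ are polynomial rings, with $GL_d$ acting on $\mathrm{span}(y_i)$ and $\mathrm{span}(z_i)$ as on $\mathrm{span}(x_i)$. $W_d(p)$ is the irreducible polynomial $GL_d$-module indexed by the one-row partition $(p)$ (isomorphic to the homogeneous polynomials of degree $p$ in $d$ variables). *)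

From HB Require Import structures.
From mathcomp Require Import all_boot all_order all_algebra.
Set Implicit Arguments. Unset Strict Implicit. Unset Printing Implicit Defensive.
Import GRing.Theory.
Local Open Scope ring_scope.

(* Nonassociative monomials (binary trees) in the generators x_i; the     *)
(* generator x_i (i < d) is  BLeaf i.                                      *)
Inductive bmon : Type := BLeaf of nat | BNode of bmon & bmon.

Fixpoint bmon_enc (t : bmon) : GenTree.tree nat :=
  match t with
  | BLeaf n => GenTree.Leaf n
  | BNode a b => GenTree.Node 0 [:: bmon_enc a; bmon_enc b]
  end.

Fixpoint bmon_dec (t : GenTree.tree nat) : option bmon :=
  match t with
  | GenTree.Leaf n => Some (BLeaf n)
  | GenTree.Node _ [:: a; b] =>
      match bmon_dec a, bmon_dec b with
      | Some a', Some b' => Some (BNode a' b')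
      | _, _ => None
      end
  | _ => None
  end.

Lemma bmon_encK : pcancel bmon_enc bmon_dec.
Proof. by elim=> [n|a IHa b IHb] //=; rewrite IHa IHb. Qed.

HB.instance Definition _ := Countable.copy bmon (pcan_type bmon_encK).

Definition is_node (t : bmon) : bool := if t is BNode _ _ then true else false.

Fixpoint leaves (t : bmon) : seq nat :=
  match t with BLeaf i => [:: i] | BNode a b => leaves a ++ leaves b end.

Fixpoint shape (t : bmon) : bmon :=
  match t with BLeaf _ => BLeaf 0 | BNode a b => BNode (shape a) (shape b) end.

(* step t t' : t' is obtained from t by applying one of the defining identities
     (uv)w = (uw)v   or   u(vw) = v(uw)
   at one position, i.e. t = C[lhs], t' = C[rhs] for some context C and some
   monomials u, v, w.  The differences t - t' span the T-ideal (verbal ideal)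
   of the variety of bicommutative algebras in the free nonassociative algebra. *)
Fixpoint step (t t' : bmon) {struct t} : bool :=
  match t, t' with
  | BNode a b, BNode a' b' =>
      [|| match a, a' with
          | BNode u v, BNode u' w' => [&& u' == u, w' == b & b' == v]
          | _, _ => false end,
          match b, b' with
          | BNode v w, BNode u' w' => [&& a' == v, u' == a & w' == w]
          | _, _ => false end,
          step a a' && (b == b')
        | (a == a') && step b b']
  | _, _ => false
  end.

Fixpoint trees_aux (d f n : nat) : seq bmon :=
  match f with
  | 0 => [::]
  | f'.+1 =>
      if n == 1%N then [seq BLeaf i | i <- iota 0 d]
      else flatten [seq [seq BNode a b | a <- trees_aux d f' k,
                                         b <- trees_aux d f' (n - k)]
                   | k <- iota 1 n.-1]
  end.
Definition trees (d n : nat) : seq bmon := trees_aux d n n.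

(* monomial basis of the degree-n part of the square of the free
   nonassociative algebra: products (non-leaf trees) with n leaves *)
Definition sqbasis (d n : nat) : seq bmon := [seq t <- trees d n | is_node t].
Definition NS (d n : nat) : nat := size (sqbasis d n).
Definition sqt (d n : nat) (i : 'I_(NS d n)) : bmon := nth (BLeaf 0) (sqbasis d n) i.

Definition mdeg_tree (d : nat) (t : bmon) : seq nat :=
  [seq count_mem k (leaves t) | k <- iota 0 d].

(* degree-n component of the T-ideal of bicommutative identities,
   as a row space of row vectors in the basis sqbasis d n *)
Definition IdealB (K : fieldType) (d n : nat) : 'M[K]_(NS d n) :=
  (\sum_(i < NS d n) \sum_(j < NS d n)
     (if step (sqt i) (sqt j)
      then <<(delta_mx 0 i - delta_mx 0 j : 'rV[K]_(NS d n))>>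
      else 0))%MS.

(* Commutative monomials of degree p in d variables, as nondecreasing words *)
Fixpoint words (d p : nat) : seq (seq nat) :=
  match p with
  | 0 => [:: [::]]
  | p'.+1 => flatten [seq [seq i :: w | w <- words d p'] | i <- iota 0 d]
  end.
Definition swords (d p : nat) : seq (seq nat) := [seq w <- words d p | sorted leq w].

(* monomial basis of the total-degree-n part of
   omega(K[Y_d]) (x) omega(K[Z_d]) = (+)_{p,q>=1} K[Y_d]_p (x) K[Z_d]_q :
   pairs (u, v) standing for y^u (x) z^v, with |u| = p >= 1, |v| = n - p >= 1 *)
Definition pbasis (d n : nat) : seq (seq nat * seq nat) :=
  flatten [seq [seq (u, v) | u <- swords d p, v <- swords d (n - p)]
          | p <- iota 1 n.-1].
Definition NT (d n : nat) : nat := size (pbasis d n).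
Definition pt (d n : nat) (j : 'I_(NT d n)) : seq nat * seq nat :=
  nth ([::], [::]) (pbasis d n) j.

Definition mdeg_pair (d : nat) (uv : seq nat * seq nat) : seq nat :=
  [seq count_mem k (uv.1 ++ uv.2) | k <- iota 0 d].

(* GL_d action.  g acts on span(x_1..x_d) by  g . x_i = \sum_j g_{j i} x_j
   (and likewise on the y's and z's), extended to algebra endomorphisms.   *)
Definition gent (K : fieldType) (d : nat) (g : 'M[K]_d) (i j : nat) : K :=
  match (insub i : option 'I_d), (insub j : option 'I_d) with
  | Some i', Some j' => g i' j'
  | _, _ => 0
  end.

(* matrix of g on the basis sqbasis d n, acting on row vectors:
   entry (i, j) = coefficient of the monomial t_j in g . t_i
   (g . t_i = product expansion of the substitution x_k |-> g . x_k) *)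
Definition actS (K : fieldType) (d n : nat) (g : 'M[K]_d) : 'M[K]_(NS d n) :=
  \matrix_(i, j)
    (if shape (sqt i) == shape (sqt j)
     then \prod_(pr <- zip (leaves (sqt j)) (leaves (sqt i))) gent g pr.1 pr.2
     else 0).

(* coefficient of the commutative monomial (word) v in g . (monomial u):
   expanding  prod_k (sum_j g_{j,u_k} y_j)  *)
Definition pcoef (K : fieldType) (d : nat) (g : 'M[K]_d) (u v : seq nat) : K :=
  \sum_(w <- words d (size u) | perm_eq w v)
     \prod_(pr <- zip w u) gent g pr.1 pr.2.

Definition actT (K : fieldType) (d n : nat) (g : 'M[K]_d) : 'M[K]_(NT d n) :=
  \matrix_(i, j) (pcoef g (pt i).1 (pt j).1 * pcoef g (pt i).2 (pt j).2).

From Pilot Require Import Defs.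
From HB Require Import structures.
From mathcomp Require Import all_boot all_order all_algebra.
From mathcomp Require Import zify ring.
Import GRing.Theory.

(* For a product t, let Y(t), resp. Z(t), be the multiset of labels of the
   leaves of t that are left, resp. right, factors.  The identities
   (uv)w = (uw)v and u(vw) = v(uw), applied anywhere in t, only permute Y(t)
   and Z(t).  Conversely they bring every product to the normal form
   y_1(...(y_k(((y z) z_1)...z_l))), in which the y's and the z's can be
   permuted freely; hence two monomials are congruent modulo the T-ideal iff
   they have the same Y and Z.  So t |-> y^Y(t) (x) z^Z(t) maps the monomial
   basis of the square onto that of omega(K[Y_d]) (x) omega(K[Z_d]) with the
   T-ideal as kernel.  It preserves multidegrees, since the leaves of t are
   Y(t) and Z(t) together, and it commutes with GL_d: substituting linear
   forms into the leaves of t and then splitting them into left and right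
   factors is the same as substituting into y^Y(t) and z^Z(t) separately. *)

Set Implicit Arguments.
Unset Strict Implicit.
Unset Printing Implicit Defensive.

Lemma perm_eq_ind (T : eqType) (R : seq T -> seq T -> Prop) :
  (forall s, R s s) -> (forall s1 s2 s3, R s1 s2 -> R s2 s3 -> R s1 s3) ->
  (forall x y s, R [:: x, y & s] [:: y, x & s]) ->
  (forall x s s', perm_eq s s' -> R s s' -> R (x :: s) (x :: s')) ->
  forall s s', perm_eq s s' -> R s s'.
Proof.
move=> Rrefl Rtrans Rswap Rcons.
have Rmove x s1 s2 : R (x :: s1 ++ s2) (s1 ++ x :: s2).
  elim: s1 => [|y s1 IH] /=; first exact: Rrefl.
  apply: Rtrans (Rswap x y _) (Rcons y _ _ _ IH).
  by rewrite -cat1s perm_catCA.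
elim=> [|x s IHs] s'.
  by case: s' => [|y s'] // /perm_size.
move=> hss'; have xs' : x \in s' by rewrite -(perm_mem hss') mem_head.
move: hss'; case/splitPr: xs' => s1 s2 hss'.
apply: Rtrans (Rmove x s1 s2); apply: Rcons (IHs _ _).
all: by rewrite -(perm_cons x) (permPl hss') -cat1s perm_catCA.
Qed.

Lemma step_congl b a a' : step a a' -> step (BNode a b) (BNode a' b).
Proof. by move=> h; rewrite /= h eqxx /= !orbT. Qed.

Lemma step_congr a b b' : step b b' -> step (BNode a b) (BNode a b').
Proof. by move=> h; rewrite /= h eqxx /= !orbT. Qed.

Lemma step_rcomm u v w : step (BNode (BNode u v) w) (BNode (BNode u w) v).
Proof. by rewrite /= !eqxx. Qed.

Lemma step_lcomm u v w : step (BNode u (BNode v w)) (BNode v (BNode u w)).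
Proof. by rewrite /= !eqxx !orbT. Qed.

Lemma step_node t t' : step t t' -> is_node t /\ is_node t'.
Proof. by case: t t' => [?|? ?] [?|? ?]. Qed.

Inductive eqv : bmon -> bmon -> Prop :=
  | eqv_step t t' of step t t' : eqv t t'
  | eqv_refl t : eqv t t
  | eqv_sym t t' of eqv t t' : eqv t' t
  | eqv_trans t1 t2 t3 of eqv t1 t2 & eqv t2 t3 : eqv t1 t3.

Lemma eqv_map (f : bmon -> bmon) :
  (forall t t', step t t' -> step (f t) (f t')) ->
  forall t t', eqv t t' -> eqv (f t) (f t').
Proof.
move=> fstep t t'; elim=> [x y /fstep|x|x y _|x y z _ IH1 _ IH2].
- exact: eqv_step.
- exact: eqv_refl.
- exact: eqv_sym.
- exact: eqv_trans IH1 IH2.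
Qed.

Lemma eqv_congl b a a' : eqv a a' -> eqv (BNode a b) (BNode a' b).
Proof. exact: (@eqv_map (BNode^~ b) (@step_congl b)). Qed.

Lemma eqv_congr a b b' : eqv b b' -> eqv (BNode a b) (BNode a b').
Proof. exact: (@eqv_map (BNode a) (@step_congr a)). Qed.

Lemma eqv_mul_assoc u X w :
  is_node X -> eqv (BNode (BNode u X) w) (BNode u (BNode X w)).
Proof.
case: X => // x1 x2 _.
apply: eqv_trans (eqv_step (step_congl _ (step_lcomm _ _ _))) _.
apply: eqv_trans (eqv_step (step_rcomm _ _ _)) _.
apply: eqv_trans (eqv_step (step_lcomm _ _ _)) _.
exact/eqv_step/step_congr/step_rcomm.
Qed.

(* [letters true s t] and [letters false s t] list the labels of the leaves of
   [t] that are left, resp. right, factors; [s] records whether [t] itself is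
   a left factor, which only matters when [t] is a leaf. *)
Fixpoint letters (k s : bool) (t : bmon) : seq nat :=
  match t with
  | BLeaf i => if k == s then [:: i] else [::]
  | BNode a b => letters k true a ++ letters k false b
  end.

Lemma letters_node k s s' t : is_node t -> letters k s t = letters k s' t.
Proof. by case: t. Qed.

Lemma perm_leaves_letters s t :
  perm_eq (leaves t) (letters true s t ++ letters false s t).
Proof.
elim: t s => [i|a IHa b IHb] s /=; first by case: s.
by apply: perm_trans (perm_cat (IHa true) (IHb false)) _; rewrite perm_catACA.
Qed.

Lemma step_letters k s t t' : step t t' -> perm_eq (letters k s t) (letters k s t').
Proof.
elim: t t' s => [i|a IHa b IHb] [j|a' b'] s //= /or4P[].
- case: a {IHa} => [//|u v]; case: a' => [//|u' w'] /and3P[/eqP-> /eqP-> /eqP->] /=.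
  by rewrite -!catA perm_cat2l perm_catC.
- case: b {IHb} => [//|v w]; case: b' => [//|u' w'] /and3P[/eqP-> /eqP-> /eqP->] /=.
  by rewrite !catA perm_cat2r perm_catC.
- by case/andP=> h /eqP<-; rewrite perm_cat2r; apply: IHa.
- by case/andP=> /eqP<- h; rewrite perm_cat2l; apply: IHb.
Qed.

Lemma eqv_letters k s t t' : eqv t t' -> perm_eq (letters k s t) (letters k s t').
Proof.
elim=> [x y|x|x y _|x y z _ IH1 _ IH2].
- exact: step_letters.
- exact: perm_refl.
- by rewrite perm_sym.
- exact: perm_trans IH1 IH2.
Qed.

Lemma eqv_leaves t t' : eqv t t' -> perm_eq (leaves t) (leaves t').
Proof.
move=> e; apply: perm_trans (perm_leaves_letters true t) _.
rewrite perm_sym; apply: perm_trans (perm_leaves_letters true t') _.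
by rewrite perm_sym; apply: perm_cat; apply: eqv_letters.
Qed.

Lemma eqv_node t t' : eqv t t' -> is_node t = is_node t'.
Proof.
elim=> [x y /step_node[-> ->]|x|x y _|x y z _ -> _ ->] //; exact: esym.
Qed.

Fixpoint lmuls (ys : seq nat) (B : bmon) : bmon :=
  if ys is y :: ys' then BNode (BLeaf y) (lmuls ys' B) else B.
Fixpoint rmuls (zs : seq nat) (B : bmon) : bmon :=
  if zs is z :: zs' then rmuls zs' (BNode B (BLeaf z)) else B.

Lemma lmuls_cat s1 s2 B : lmuls (s1 ++ s2) B = lmuls s1 (lmuls s2 B).
Proof. by elim: s1 => //= y s1 ->. Qed.

Lemma rmuls_cat s1 s2 B : rmuls (s1 ++ s2) B = rmuls s2 (rmuls s1 B).
Proof. by elim: s1 B => //= z s1 IH B; rewrite IH. Qed.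

Lemma lmuls_node ys B : is_node B -> is_node (lmuls ys B).
Proof. by case: ys. Qed.

Lemma rmuls_node zs B : is_node B -> is_node (rmuls zs B).
Proof. by elim: zs B => [|z zs IH] B //= _; apply: IH. Qed.

Lemma step_lmuls ys B B' : step B B' -> step (lmuls ys B) (lmuls ys B').
Proof. by elim: ys => [|y ys IH] // h; apply/step_congr/IH. Qed.

Lemma step_rmuls zs B B' : step B B' -> step (rmuls zs B) (rmuls zs B').
Proof. by elim: zs B B' => [|z zs IH] // B B' h; apply/IH/step_congl. Qed.

Lemma eqv_lmuls ys B B' : eqv B B' -> eqv (lmuls ys B) (lmuls ys B').
Proof. exact: (@eqv_map (lmuls ys) (@step_lmuls ys)). Qed.

Lemma eqv_rmuls zs B B' : eqv B B' -> eqv (rmuls zs B) (rmuls zs B').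
Proof. exact: (@eqv_map (rmuls zs) (@step_rmuls zs)). Qed.

Lemma lmuls_perm B ys ys' : perm_eq ys ys' -> eqv (lmuls ys B) (lmuls ys' B).
Proof.
move: ys ys'; apply: perm_eq_ind => [s|s1 s2 s3|x y s|x s s' _ /= h].
- exact: eqv_refl.
- exact: eqv_trans.
- exact/eqv_step/step_lcomm.
- exact: eqv_congr h.
Qed.

Lemma rmuls_perm zs zs' : perm_eq zs zs' -> forall B, eqv (rmuls zs B) (rmuls zs' B).
Proof.
move: zs zs'; apply: perm_eq_ind => [s|s1 s2 s3 h12 h23|x y s|x s s' _ IH] B.
- exact: eqv_refl.
- exact: eqv_trans (h12 B) (h23 B).
- exact: eqv_step (step_rmuls s (step_rcomm B (BLeaf x) (BLeaf y))).
- exact: IH.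
Qed.

Lemma eqv_mul_lmuls X ys W :
  eqv (BNode X (lmuls ys W)) (lmuls ys (BNode X W)).
Proof.
elim: ys => [|y ys IH]; first exact: eqv_refl.
apply: eqv_trans (eqv_step (step_lcomm X (BLeaf y) (lmuls ys W))) _.
exact: eqv_congr IH.
Qed.

Lemma eqv_mul_rmuls X zs B :
  is_node B -> eqv (BNode X (rmuls zs B)) (rmuls zs (BNode X B)).
Proof.
elim: zs B => [|z zs IH] B nB; first exact: eqv_refl.
apply: eqv_trans (IH (BNode B (BLeaf z)) isT) _.
exact (eqv_rmuls zs (eqv_sym (eqv_mul_assoc X (BLeaf z) nB))).
Qed.

Lemma eqv_lmuls_mulr ys X w :
  is_node X -> eqv (BNode (lmuls ys X) w) (lmuls ys (BNode X w)).
Proof.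
move=> nX; elim: ys => [|y ys IH]; first exact: eqv_refl.
apply: eqv_trans (eqv_mul_assoc (BLeaf y) w (lmuls_node ys nX)) _.
exact: eqv_congr IH.
Qed.

Lemma eqv_rmuls_lmuls zs ys W :
  is_node W -> eqv (rmuls zs (lmuls ys W)) (lmuls ys (rmuls zs W)).
Proof.
elim: zs W => [|z zs IH] W nW; first exact: eqv_refl.
apply: eqv_trans _ (IH (BNode W (BLeaf z)) isT).
exact (eqv_rmuls zs (eqv_lmuls_mulr ys (BLeaf z) nW)).
Qed.

(* The normal form [y_1 (y_2 ( ... (y_k ((((y z) z_1) z_2) ... z_l))))], where
   [ys = [:: y_1; ...; y_k]] and [zs = [:: z_1; ...; z_l]]. *)
Definition nf (y : nat) (ys : seq nat) (z : nat) (zs : seq nat) : bmon :=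
  lmuls ys (rmuls zs (BNode (BLeaf y) (BLeaf z))).

Lemma eqv_nf t : is_node t -> exists y ys z zs, eqv t (nf y ys z zs).
Proof.
elim: t => // a IHa b IHb _.
case: a IHa => [i|a1 a2] IHa; case: b IHb => [j|b1 b2] IHb.
- by exists i, [::], j, [::]; apply: eqv_refl.
- have [y [ys [z [zs e]]]] := IHb isT.
  by exists y, (i :: ys), z, zs; exact (eqv_congr (BLeaf i) e).
- have [y [ys [z [zs e]]]] := IHa isT.
  exists y, ys, z, (zs ++ [:: j]); apply: eqv_trans (eqv_congl _ e) _.
  have nW : is_node (rmuls zs (BNode (BLeaf y) (BLeaf z))) by apply: rmuls_node.
  by rewrite /nf rmuls_cat; exact (eqv_lmuls_mulr ys (BLeaf j) nW).
- have [y [ys [z [zs e]]]] := IHa isT.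
  have [y' [ys' [z' [zs' e']]]] := IHb isT.
  exists y, (ys' ++ y' :: ys), z, (zs ++ z' :: zs').
  apply: eqv_trans (eqv_congl _ e) _; apply: eqv_trans (eqv_congr _ e') _.
  rewrite /nf lmuls_cat rmuls_cat.
  set W := rmuls zs _; have nW : is_node W by apply: rmuls_node.
  apply: eqv_trans (eqv_mul_lmuls _ ys' _) _; apply: eqv_lmuls.
  apply: eqv_trans (eqv_mul_rmuls _ zs' (isT : is_node (BNode (BLeaf y') (BLeaf z')))) _.
  rewrite -[rmuls (z' :: zs') W]/(rmuls zs' (BNode W (BLeaf z'))).
  apply: eqv_trans _ (eqv_rmuls_lmuls zs' (y' :: ys) (isT : is_node (BNode W (BLeaf z')))).
  apply: eqv_rmuls; apply: eqv_trans (eqv_step (step_lcomm _ _ _)) _.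
  exact (eqv_congr (BLeaf y') (eqv_lmuls_mulr ys (BLeaf z') nW)).
Qed.

Lemma letters_lmuls k s ys W : is_node W ->
  letters k s (lmuls ys W) = (if k then ys else [::]) ++ letters k s W.
Proof.
move=> nW; elim: ys s => [|y ys IH] s /=; first by case: k.
by rewrite IH (letters_node k false s nW); case: (k) => /=.
Qed.

Lemma letters_rmuls k s zs B : is_node B ->
  letters k s (rmuls zs B) = letters k s B ++ (if k then [::] else zs).
Proof.
elim: zs B => [|z zs IH] B nB /=; first by case: (k); rewrite cats0.
by rewrite IH //= (letters_node k true s nB) -catA; case: (k).
Qed.

Lemma letters_nf k s y ys z zs :
  letters k s (nf y ys z zs) = if k then ys ++ [:: y] else z :: zs.
Proof. by rewrite letters_lmuls ?rmuls_node ?letters_rmuls //; case: k. Qed.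

Lemma eqv_mul_rmuls_comm X Y zs w :
  eqv (BNode X (rmuls zs (BNode Y w))) (BNode Y (rmuls zs (BNode X w))).
Proof.
apply: eqv_trans (eqv_mul_rmuls X zs (isT : is_node (BNode Y w))) _.
apply: eqv_trans _ (eqv_sym (eqv_mul_rmuls Y zs (isT : is_node (BNode X w)))).
exact/eqv_rmuls/eqv_step/step_lcomm.
Qed.

Lemma eqv_nf_perm y ys z zs y' ys' z' zs' :
  perm_eq (y :: ys) (y' :: ys') -> perm_eq (z :: zs) (z' :: zs') ->
  eqv (nf y ys z zs) (nf y' ys' z' zs').
Proof.
move=> hY hZ; apply: eqv_trans (_ : eqv _ (nf y' ys' z zs)) _; last first.
  exact (eqv_lmuls ys' (rmuls_perm hZ (BLeaf y'))).
have core s s' : perm_eq s s' ->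
    eqv (nf (head 0 s) (behead s) z zs) (nf (head 0 s') (behead s') z zs).
  move: s s'; apply: perm_eq_ind => [s|s1 s2 s3|x x' s|x s s' hs _] /=.
  - exact: eqv_refl.
  - exact: eqv_trans.
  - apply: eqv_trans (eqv_mul_lmuls _ s _) _.
    apply: eqv_trans _ (eqv_sym (eqv_mul_lmuls _ s _)).
    exact/eqv_lmuls/eqv_mul_rmuls_comm.
  - exact: lmuls_perm.
exact: core hY.
Qed.

Lemma eqv_of_letters t t' : is_node t -> is_node t' ->
  perm_eq (letters true true t) (letters true true t') ->
  perm_eq (letters false true t) (letters false true t') -> eqv t t'.
Proof.
move=> /eqv_nf[y [ys [z [zs e]]]] /eqv_nf[y' [ys' [z' [zs' e']]]] hY hZ.
have hnf k : perm_eq (letters k true (nf y ys z zs)) (letters k true (nf y' ys' z' zs')).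
  rewrite -(permPl (eqv_letters k true e)) perm_sym.
  by rewrite -(permPl (eqv_letters k true e')) perm_sym; case: k.
apply: eqv_trans e (eqv_trans _ (eqv_sym e')); apply: eqv_nf_perm.
- have := hnf true; rewrite !letters_nf.
  by rewrite -(cat1s y) -(cat1s y') perm_catC perm_sym perm_catC perm_sym.
- by have := hnf false; rewrite !letters_nf.
Qed.

Definition bounded (d : nat) (s : seq nat) : bool := all (fun i => i < d) s.

Lemma uniq_flatten_map (I T : eqType) (s : seq I) (F : I -> seq T) (key : T -> I) :
  uniq s -> {in s, forall i, uniq (F i)} ->
  {in s, forall i, {in F i, forall x, key x = i}} -> uniq (flatten (map F s)).
Proof.
elim: s => //= i s IHs /andP[si us] uF keyF.
rewrite cat_uniq uF ?mem_head //= IHs //; last 2 first.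
- by move=> j sj; apply: uF; rewrite in_cons sj orbT.
- by move=> j sj; apply: keyF; rewrite in_cons sj orbT.
rewrite andbT; apply/hasPn => x /flattenP[_ /mapP[j sj ->] xFj]; apply/negP => xFi.
move: si; rewrite -(keyF i _ x) ?mem_head // (keyF j _ x) ?sj //.
by rewrite in_cons sj orbT.
Qed.

Lemma size_leaves_gt0 t : 0 < size (leaves t).
Proof. by elim: t => //= a IHa b _; rewrite size_cat addn_gt0 IHa. Qed.

Lemma trees_aux_size d f n t : t \in trees_aux d f n -> size (leaves t) = n.
Proof.
elim: f n t => [|f IH] n t //=; case: ifP => [/eqP-> /mapP[i _ ->] //| _].
move=> /flattenP[_ /mapP[k /[!mem_iota] hk ->] /allpairsP[[a b] [/= ha hb ->]]].
by rewrite /= size_cat (IH _ _ ha) (IH _ _ hb); lia.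
Qed.

Lemma mem_trees_aux d f n t : n <= f ->
  (t \in trees_aux d f n) = (size (leaves t) == n) && bounded d (leaves t).
Proof.
elim: f n t => [|f IH] n t hn /=.
  by move: hn; rewrite leqn0 => /eqP->; have := size_leaves_gt0 t; case: (size _).
case: ifP => [/eqP-> | /negbT n1].
  case: t => [i|a b] /=.
    by rewrite mem_map ?mem_iota /= ?andbT // => x y [].
  have /negbTE-> : BNode a b \notin [seq BLeaf i | i <- iota 0 d] by apply/mapP => -[].
  have := size_leaves_gt0 a; have := size_leaves_gt0 b.
  by rewrite size_cat => hb ha; symmetry; apply/andP => -[/eqP h _]; lia.
apply/flattenP/andP => [[_ /mapP[k /[!mem_iota] hk ->]]|[/eqP sz bt]].
  move=> /allpairsP[[a b] [/= ha hb ->]] /=.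
  rewrite IH in ha; last lia; rewrite IH in hb; last lia.
  case/andP: ha => /eqP sa ba; case/andP: hb => /eqP sb bb.
  by split; [rewrite size_cat sa sb; apply/eqP; lia | rewrite /bounded all_cat; exact/andP].
case: t sz bt => [i|a b] /= sz; first by rewrite -sz in n1.
rewrite size_cat in sz; have := size_leaves_gt0 a; have := size_leaves_gt0 b.
rewrite /bounded all_cat => hb ha /andP[ba bb].
eexists; first by apply/mapP; exists (size (leaves a)) => //; rewrite mem_iota; lia.
apply/allpairsP; exists (a, b); split=> //=; rewrite IH /bounded ?ba ?bb ?andbT //; lia.
Qed.

Lemma uniq_trees_aux d f n : uniq (trees_aux d f n).
Proof.
elim: f n => [|f IH] n //=; case: ifP => _.
  by rewrite map_inj_uniq ?iota_uniq // => x y [].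
pose key t := if t is BNode a _ then size (leaves a) else 0.
apply: (@uniq_flatten_map _ _ _ _ key); first exact: iota_uniq.
  by move=> k _; apply: allpairs_uniq => // -[? ?] [? ?] _ _ [-> ->].
by move=> k _ _ /allpairsP[[a b] [/= ha _ ->]]; apply: trees_aux_size ha.
Qed.

Lemma mem_sqbasis d n t :
  (t \in sqbasis d n) = [&& is_node t, size (leaves t) == n & bounded d (leaves t)].
Proof. by rewrite mem_filter mem_trees_aux. Qed.

Lemma uniq_sqbasis d n : uniq (sqbasis d n).
Proof. exact/filter_uniq/uniq_trees_aux. Qed.

Lemma eqv_mem_sqbasis d n t t' : eqv t t' -> (t \in sqbasis d n) = (t' \in sqbasis d n).
Proof.
move=> e; have pl := eqv_leaves e.
by rewrite !mem_sqbasis (eqv_node e) (perm_size pl) /bounded (perm_all _ pl).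
Qed.

Lemma mem_words d p w : (w \in words d p) = (size w == p) && bounded d w.
Proof.
elim: p w => [|p IH] [|i w] //=; first by apply/negbTE/allpairsP => -[[? ?] [_ _]].
apply/allpairsP/and3P => [[[j w'] [/= /[!mem_iota] hj /[!IH] /andP[sw bw] [-> ->]]]|].
  by rewrite eqSS.
by case=> sw i_lt_d bw; exists (i, w); rewrite /= mem_iota IH -eqSS sw bw.
Qed.

Lemma uniq_words d p : uniq (words d p).
Proof.
elim: p => [|p IH] //=.
by apply: allpairs_uniq; rewrite ?iota_uniq // => -[? ?] [? ?] _ _ [-> ->].
Qed.

Lemma sum_words_cons (V : nmodType) d p (F : seq nat -> V) :
  (\sum_(w <- words d p.+1) F w = \sum_(i <- iota 0 d) \sum_(w <- words d p) F (i :: w))%R.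
Proof. by rewrite big_flatten big_map; apply: eq_bigr => i _; rewrite big_map. Qed.

Lemma mem_pbasis d n u v : ((u, v) \in pbasis d n) =
  [&& sorted leq u, sorted leq v, bounded d u, bounded d v,
      0 < size u, 0 < size v & size u + size v == n].
Proof.
apply/flattenP/and5P => [[_ /mapP[p /[!mem_iota] hp ->]]|].
  case/allpairsP=> -[u' v'] [/= /[!mem_filter] /[!mem_words] hu hv [-> ->]].
  case/and3P: hu => -> /eqP-> ->; case/and3P: hv => -> /eqP-> ->.
  by split=> //; apply/and3P; split; try apply/eqP; lia.
case=> su sv bu bv /and3P[hu hv /eqP hn].
eexists; first by apply/mapP; exists (size u) => //; rewrite mem_iota; lia.
apply/allpairsP; exists (u, v).
by split; rewrite //= mem_filter mem_words ?su ?sv ?bu ?bv -?hn ?addKn ?eqxx.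
Qed.

Lemma uniq_pbasis d n : uniq (pbasis d n).
Proof.
apply: (@uniq_flatten_map _ _ _ _ (fun uv => size uv.1)); first exact: iota_uniq.
  move=> p _; apply: allpairs_uniq; try exact/filter_uniq/uniq_words.
  by move=> [? ?] [? ?] _ _ [-> ->].
move=> p _ _ /allpairsP[[u v] [/= /[!mem_filter] /[!mem_words] hu _ ->]] /=.
by case/and3P: hu => _ /eqP.
Qed.

Definition yz (t : bmon) : seq nat * seq nat :=
  (sort leq (letters true true t), sort leq (letters false true t)).

Definition yz_tree (uv : seq nat * seq nat) : bmon :=
  nf (head 0 uv.1) (behead uv.1) (head 0 uv.2) (behead uv.2).

Lemma yz_eqv t t' : eqv t t' -> yz t = yz t'.
Proof.
move=> e; congr (_, _); apply/(perm_sortP leq_total leq_trans anti_leq).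
all: exact: eqv_letters.
Qed.

Lemma eqv_yz t t' : is_node t -> is_node t' -> yz t = yz t' -> eqv t t'.
Proof.
move=> nt nt' [hY hZ]; apply: eqv_of_letters => //.
all: by apply/(perm_sortP leq_total leq_trans anti_leq).
Qed.

Lemma yz_mem d n t : t \in sqbasis d n -> yz t \in pbasis d n.
Proof.
rewrite mem_sqbasis => /and3P[nt /eqP <-]; have pl := perm_leaves_letters true t.
have [y [ys [z [zs /eqv_letters e]]]] := eqv_nf nt.
rewrite mem_pbasis !sort_sorted ?leq_total //= !size_sort /bounded !all_sort.
rewrite (perm_all _ pl) all_cat => /andP[-> ->].
rewrite (perm_size pl) size_cat eqxx (perm_size (e true true)) (perm_size (e false true)).
by rewrite !letters_nf size_cat addn1.
Qed.

Lemma yz_treeK d n uv : uv \in pbasis d n -> yz (yz_tree uv) = uv.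
Proof.
case: uv => u v; rewrite mem_pbasis => /and5P[sY sZ _ _ /and3P[]].
case: u sY => [|y ys] // sY _; case: v sZ => [|z zs] // sZ _ _.
rewrite /yz !letters_nf.
have -> : sort leq (ys ++ [:: y]) = sort leq (y :: ys).
  by apply/(perm_sortP leq_total leq_trans anti_leq); rewrite perm_catC.
by rewrite !sorted_sort //; apply: leq_trans.
Qed.

Lemma yz_tree_mem d n uv : uv \in pbasis d n -> yz_tree uv \in sqbasis d n.
Proof.
case: uv => u v; rewrite mem_pbasis => /and5P[_ _ bY bZ /and3P[]].
case: u bY => [|y ys] // bY _; case: v bZ => [|z zs] // bZ _ hn.
have pl : perm_eq (leaves (yz_tree (y :: ys, z :: zs))) ((y :: ys) ++ (z :: zs)).
  apply: perm_trans (perm_leaves_letters true _) _.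
  by rewrite !letters_nf perm_cat2r perm_catC.
rewrite mem_sqbasis lmuls_node ?rmuls_node //= (perm_size pl) size_cat hn /=.
by rewrite /bounded in bY bZ; rewrite /bounded (perm_all _ pl) all_cat bY bZ.
Qed.

Lemma mdeg_tree_yz d t : mdeg_tree d t = mdeg_pair d (yz t).
Proof.
apply/eq_map => k; apply/permP.
apply: perm_trans (perm_leaves_letters true t) _.
by apply: perm_cat; rewrite perm_sym perm_sort.
Qed.

Fixpoint relabel (t : bmon) (w : seq nat) : bmon :=
  match t with
  | BLeaf _ => BLeaf (head 0 w)
  | BNode a b => BNode (relabel a (take (size (leaves a)) w))
                       (relabel b (drop (size (leaves a)) w))
  end.

Lemma leaves_relabel t w : size w = size (leaves t) -> leaves (relabel t w) = w.
Proof.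
elim: t w => [i|a IHa b IHb] w /=; first by case: w => [|x []].
rewrite size_cat => hw; rewrite IHa ?IHb ?cat_take_drop //.
  by rewrite size_drop hw addKn.
by rewrite size_takel // hw leq_addr.
Qed.

Lemma shape_relabel t w : Defs.shape (relabel t w) = Defs.shape t.
Proof. by elim: t w => [i|a IHa b IHb] w //=; rewrite IHa IHb. Qed.

Lemma size_leaves_shape t : size (leaves (Defs.shape t)) = size (leaves t).
Proof. by elim: t => //= a IHa b IHb; rewrite !size_cat IHa IHb. Qed.

Lemma relabel_leaves t t' : Defs.shape t = Defs.shape t' -> relabel t (leaves t') = t'.
Proof.
elim: t t' => [i|a IHa b IHb] [j|a' b'] //= [ha hb].
have e : size (leaves a) = size (leaves a').
  by rewrite -size_leaves_shape ha size_leaves_shape.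
by rewrite e take_size_cat // drop_size_cat // IHa // IHb.
Qed.

Fixpoint sides (s : bool) (t : bmon) : bitseq :=
  match t with
  | BLeaf _ => [:: s]
  | BNode a b => sides true a ++ sides false b
  end.

Lemma size_sides s t : size (sides s t) = size (leaves t).
Proof. by elim: t s => //= a IHa b IHb s; rewrite !size_cat IHa IHb. Qed.

Lemma sides_shape s t : sides s (Defs.shape t) = sides s t.
Proof. by elim: t s => //= a IHa b IHb s; rewrite IHa IHb. Qed.

Lemma letters_mask k s t :
  letters k s t = mask (if k then sides s t else map negb (sides s t)) (leaves t).
Proof.
elim: t s => [i|a IHa b IHb] s /=; first by case: k; case: s.
rewrite IHa IHb; case: (k); rewrite ?map_cat mask_cat //.
all: by rewrite ?size_map size_sides.
Qed.

Lemma perm_same_shape d n t : t \in sqbasis d n ->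
  perm_eq [seq t' <- sqbasis d n | Defs.shape t == Defs.shape t']
          (map (relabel t) (words d n)).
Proof.
rewrite mem_sqbasis => /and3P[nt /eqP sz _].
apply: uniq_perm; first exact/filter_uniq/uniq_sqbasis.
  rewrite map_inj_in_uniq ?uniq_words // => w1 w2.
  rewrite !mem_words => /andP[/eqP s1 _] /andP[/eqP s2 _] /(congr1 leaves).
  by rewrite !leaves_relabel ?s1 ?s2.
move=> t'; rewrite mem_filter mem_sqbasis; apply/and4P/mapP.
  case=> /eqP st nt' /eqP s' b'; exists (leaves t'); last by rewrite relabel_leaves.
  by rewrite mem_words s' eqxx.
case=> w /[!mem_words] /andP[/eqP sw bw] ->.
have lw : leaves (relabel t w) = w by rewrite leaves_relabel // sw.
rewrite shape_relabel lw sw bw eqxx; split=> //.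
by case: (t) nt.
Qed.

Lemma yz_relabel t w : size w = size (leaves t) ->
  yz (relabel t w) =
    (sort leq (mask (sides true t) w), sort leq (mask (map negb (sides true t)) w)).
Proof.
move=> sw; rewrite /yz !letters_mask leaves_relabel //.
by rewrite -sides_shape shape_relabel sides_shape.
Qed.

Lemma sort_leq_eq (s u : seq nat) : sorted leq u -> (sort leq s == u) = perm_eq s u.
Proof.
move=> su; apply/eqP/idP => [<-|/(perm_sortP leq_total leq_trans anti_leq) ->].
  by rewrite perm_sym perm_sort.
by rewrite sorted_sort //; apply: leq_trans.
Qed.

Local Open Scope ring_scope.

Lemma sum_delta_seq (R : pzSemiRingType) (T : eqType) (r : seq T) x (F : T -> R) :
  x \in r -> uniq r -> \sum_(y <- r) (x == y)%:R * F y = F x.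
Proof.
move=> xr ur; rewrite (bigD1_seq x) //= eqxx mul1r big1 ?addr0 // => y.
by rewrite eq_sym => /negbTE->; rewrite mul0r.
Qed.

Section Substitution.
Variables (K : fieldType) (d : nat) (g : 'M[K]_d).

(* The coefficient of the word [w] in the image under [g] of the word [u]. *)
Definition wordcoef (w u : seq nat) : K := \prod_(pr <- zip w u) gent g pr.1 pr.2.

Lemma wordcoef_cons i w l u : wordcoef (i :: w) (l :: u) = gent g i l * wordcoef w u.
Proof. by rewrite /wordcoef big_cons. Qed.

Lemma sum_words_mask (F : seq nat -> seq nat -> K) m u : size m = size u ->
  \sum_(w <- words d (size u)) F (mask m w) (mask (map negb m) w) * wordcoef w u =
  \sum_(w1 <- words d (size (mask m u)))
    \sum_(w2 <- words d (size (mask (map negb m) u)))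
      F w1 w2 * (wordcoef w1 (mask m u) * wordcoef w2 (mask (map negb m) u)).
Proof.
elim: u m F => [|l u IH] [|b m] F //= sm.
  by rewrite !big_seq1 /wordcoef !big_nil !mulr1.
case: sm => sm; rewrite sum_words_cons; case: b => /=.
  rewrite sum_words_cons; apply: eq_bigr => i _.
  under eq_bigr do rewrite wordcoef_cons mulrCA.
  rewrite -mulr_sumr (IH m (fun w1 w2 => F (i :: w1) w2)) // mulr_sumr.
  apply: eq_bigr => w1 _; rewrite mulr_sumr; apply: eq_bigr => w2 _.
  by rewrite wordcoef_cons; ring.
under [RHS]eq_bigr do rewrite sum_words_cons.
rewrite [RHS]exchange_big; apply: eq_bigr => i _.
under eq_bigr do rewrite wordcoef_cons mulrCA.
rewrite -mulr_sumr (IH m (fun w1 w2 => F w1 (i :: w2))) // mulr_sumr.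
apply: eq_bigr => w1 _; rewrite mulr_sumr; apply: eq_bigr => w2 _.
by rewrite wordcoef_cons; ring.
Qed.

(* Pairs a functional [F] on words with the image under [g] of the word [u]. *)
Definition expand (F : seq nat -> K) (u : seq nat) : K :=
  \sum_(w <- words d (size u)) F w * wordcoef w u.

Lemma expand_cons F l u :
  expand F (l :: u) = \sum_(i <- iota 0 d) gent g i l * expand (fun w => F (i :: w)) u.
Proof.
rewrite /expand /= sum_words_cons; apply: eq_bigr => i _; rewrite mulr_sumr.
by apply: eq_bigr => w _; rewrite wordcoef_cons mulrCA.
Qed.

Lemma expand_perm u u' : perm_eq u u' ->
  forall F, (forall w w', perm_eq w w' -> F w = F w') -> expand F u = expand F u'.
Proof.
move: u u'; apply: perm_eq_ind => [s|s1 s2 s3 h12 h23|x y s|x s s' _ IH] F hF.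
- by [].
- by rewrite (h12 F hF) (h23 F hF).
- rewrite !expand_cons.
  under eq_bigr do rewrite expand_cons mulr_sumr.
  under [RHS]eq_bigr do rewrite expand_cons mulr_sumr.
  rewrite [RHS]exchange_big; apply: eq_bigr => i _; apply: eq_bigr => j _.
  rewrite mulrCA; congr (_ * (_ * _)); apply: eq_bigr => w _; congr (_ * _).
  by apply: hF; apply/permP => P /=; rewrite addnCA.
- rewrite !expand_cons; apply: eq_bigr => i _; congr (_ * _).
  by apply: IH => w w' ww'; apply: hF; rewrite perm_cons.
Qed.

Lemma pcoef_expand u v : pcoef g u v = expand (fun w => (perm_eq w v)%:R) u.
Proof.
rewrite /pcoef /expand big_mkcond; apply: eq_bigr => w _.
by case: (perm_eq w v); rewrite ?mul1r ?mul0r.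
Qed.

Lemma pcoef_perm u u' v : perm_eq u u' -> pcoef g u v = pcoef g u' v.
Proof.
by move=> uu'; rewrite !pcoef_expand; apply: expand_perm => // w w' /permPl->.
Qed.

End Substitution.

Section YZMatrix.
Variables (K : fieldType) (d n : nat).

Lemma sqt_mem (i : 'I_(NS d n)) : sqt i \in sqbasis d n.
Proof. exact: mem_nth. Qed.

Lemma pt_mem (k : 'I_(NT d n)) : pt k \in pbasis d n.
Proof. exact: mem_nth. Qed.

Lemma sqt_inj : injective (@sqt d n).
Proof.
move=> i j /eqP; rewrite nth_uniq ?uniq_sqbasis // => /eqP; exact: val_inj.
Qed.

Lemma pt_inj : injective (@pt d n).
Proof.
move=> i j /eqP; rewrite nth_uniq ?uniq_pbasis // => /eqP; exact: val_inj.
Qed.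

Lemma sqt_onto t : t \in sqbasis d n -> exists i : 'I_(NS d n), sqt i = t.
Proof.
by move=> tS; exists (Ordinal (etrans (index_mem _ _) tS)); rewrite /sqt nth_index.
Qed.

Lemma sum_sqt (V : nmodType) (F : bmon -> V) :
  \sum_(i < NS d n) F (sqt i) = \sum_(t <- sqbasis d n) F t.
Proof. by rewrite [RHS](big_nth (BLeaf 0)) big_mkord. Qed.

Lemma sum_pt (V : nmodType) (F : seq nat * seq nat -> V) :
  \sum_(k < NT d n) F (pt k) = \sum_(uv <- pbasis d n) F uv.
Proof. by rewrite [RHS](big_nth ([::], [::])) big_mkord. Qed.

Definition yzmx : 'M[K]_(NS d n, NT d n) := \matrix_(i, k) (yz (sqt i) == pt k)%:R.

Definition yz_treemx : 'M[K]_(NT d n, NS d n) :=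
  \matrix_(k, j) (yz_tree (pt k) == sqt j)%:R.

Lemma yz_treemxK : yz_treemx *m yzmx = 1%:M.
Proof.
apply/matrixP => k k'; rewrite !mxE.
under eq_bigr do rewrite !mxE.
rewrite (sum_sqt (fun t => (yz_tree (pt k) == t)%:R * (yz t == pt k')%:R)).
rewrite sum_delta_seq ?uniq_sqbasis ?yz_tree_mem ?pt_mem //.
by rewrite (yz_treeK (pt_mem k)) (inj_eq pt_inj).
Qed.

Lemma yzmx_yz_treemxE i j :
  (yzmx *m yz_treemx) i j = (yz_tree (yz (sqt i)) == sqt j)%:R.
Proof.
rewrite !mxE; under eq_bigr do rewrite !mxE.
rewrite (sum_pt (fun uv => (yz (sqt i) == uv)%:R * (yz_tree uv == sqt j)%:R)).
by rewrite sum_delta_seq ?uniq_pbasis ?yz_mem ?sqt_mem.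
Qed.

Lemma eqv_sub_IdealB t t' : eqv t t' -> forall i j, sqt i = t -> sqt j = t' ->
  ((delta_mx 0 i - delta_mx 0 j : 'rV[K]_(NS d n)) <= IdealB K d n)%MS.
Proof.
elim=> {t t'} [t t' tt'|t|t t' _ IH|t1 t2 t3 e12 IH12 _ IH23] i j ti tj.
- apply: (sumsmx_sup i) => //; apply: (sumsmx_sup j) => //.
  by rewrite ti tj tt' genmxE.
- by rewrite (sqt_inj (etrans ti (esym tj))) subrr sub0mx.
- by rewrite -eqmx_opp opprB; apply: IH.
- have [k tk] : exists k : 'I_(NS d n), sqt k = t2.
    by apply: sqt_onto; rewrite -(eqv_mem_sqbasis d n e12) -ti sqt_mem.
  rewrite -(subrKA (delta_mx 0 k)).
  exact: addmx_sub (IH12 _ _ ti tk) (IH23 _ _ tk tj).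
Qed.

(* A kernel vector [v] satisfies [v = v *m (1 - yzmx *m yz_treemx)], and the row
   of that matrix indexed by [t] is the difference of [t] and its normal form. *)
Lemma kermx_yzmx_sub : (kermx yzmx <= IdealB K d n)%MS.
Proof.
apply/rV_subP => v /sub_kermxP vA.
have -> : v = v *m (1%:M - yzmx *m yz_treemx).
  by rewrite mulmxBr mulmx1 mulmxA vA mul0mx subr0.
apply: submx_trans (submxMl _ _) _; apply/row_subP => i.
have ti := sqt_mem i; have yS := yz_tree_mem (yz_mem ti).
have [j tj] := sqt_onto yS.
have -> : row i (1%:M - yzmx *m yz_treemx) = delta_mx 0 i - delta_mx 0 j.
  apply/rowP => j'; rewrite mxE mxE [X in _ + X]mxE yzmx_yz_treemxE !mxE.
  by rewrite -tj (inj_eq sqt_inj) eq_sym [j' == j]eq_sym.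
have e : eqv (sqt i) (sqt j).
  apply: eqv_yz; last by rewrite tj (yz_treeK (yz_mem ti)).
    by move: ti; rewrite mem_sqbasis => /andP[].
  by move: yS; rewrite -tj mem_sqbasis => /andP[].
exact: eqv_sub_IdealB e i j erefl erefl.
Qed.

Lemma IdealB_sub_kermx : (IdealB K d n <= kermx yzmx)%MS.
Proof.
apply/sumsmx_subP => i _; apply/sumsmx_subP => j _.
case: ifP => [ij|_]; last by rewrite sub0mx.
rewrite genmxE sub_kermx mulmxBl -!rowE subr_eq0; apply/eqP/rowP => k.
by rewrite !mxE (yz_eqv (eqv_step ij)).
Qed.

Lemma kermx_yzmx : (kermx yzmx == IdealB K d n)%MS.
Proof. by rewrite kermx_yzmx_sub IdealB_sub_kermx. Qed.

Lemma row_full_yzmx : row_full yzmx.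
Proof. by apply/row_fullP; exists yz_treemx; apply: yz_treemxK. Qed.

Lemma yzmx_mdeg i j : mdeg_tree d (sqt i) != mdeg_pair d (pt j) -> yzmx i j = 0.
Proof.
by rewrite mxE mdeg_tree_yz; case: (yz (sqt i) =P pt j) => [->|]; rewrite ?eqxx.
Qed.

Lemma yzmx_actTE (g : 'M[K]_d) i k :
  (yzmx *m actT n g) i k = pcoef g (letters true true (sqt i)) (pt k).1 *
                           pcoef g (letters false true (sqt i)) (pt k).2.
Proof.
rewrite !mxE; under eq_bigr do rewrite !mxE.
rewrite (sum_pt (fun uv => (yz (sqt i) == uv)%:R *
                           (pcoef g uv.1 (pt k).1 * pcoef g uv.2 (pt k).2))).
rewrite sum_delta_seq ?uniq_pbasis ?yz_mem ?sqt_mem //=.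
by rewrite !(pcoef_perm g _ (permEl (perm_sort leq _))).
Qed.

Lemma actS_yzmxE (g : 'M[K]_d) i k :
  (actS n g *m yzmx) i k = pcoef g (letters true true (sqt i)) (pt k).1 *
                           pcoef g (letters false true (sqt i)) (pt k).2.
Proof.
rewrite !mxE; under eq_bigr do rewrite !mxE.
have := sqt_mem i; rewrite mem_sqbasis => /and3P[nt /eqP szt _].
case ek: (pt k) (pt_mem k) => [u v]; rewrite mem_pbasis => /and3P[su sv _] /=.
rewrite (sum_sqt (fun t => (if Defs.shape (sqt i) == Defs.shape t
                            then wordcoef g (leaves t) (leaves (sqt i)) else 0) *
                           (yz t == (u, v))%:R)).
transitivity (\sum_(t <- sqbasis d n | Defs.shape (sqt i) == Defs.shape t)
                wordcoef g (leaves t) (leaves (sqt i)) * (yz t == (u, v))%:R).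
  by rewrite [RHS]big_mkcond; apply: eq_bigr => t _; case: ifP; rewrite ?mul0r.
rewrite -big_filter (perm_big _ (perm_same_shape (sqt_mem i))) big_map.
set m := sides true (sqt i).
transitivity (\sum_(w <- words d (size (leaves (sqt i))))
   (perm_eq (mask m w) u)%:R * (perm_eq (mask (map negb m) w) v)%:R *
     wordcoef g w (leaves (sqt i))).
  rewrite szt; apply: eq_big_seq => w; rewrite mem_words => /andP[/eqP sw _].
  rewrite leaves_relabel ?yz_relabel ?sw // xpair_eqE !sort_leq_eq // mulrC.
  by case: (perm_eq _ u); case: (perm_eq _ v); rewrite ?mul1r ?mul0r.
rewrite (sum_words_mask g (fun w1 w2 => (perm_eq w1 u)%:R * (perm_eq w2 v)%:R));
  last by rewrite size_sides.
rewrite -[mask m _](letters_mask true) -[mask (map negb m) _](letters_mask false).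
rewrite !pcoef_expand /expand big_distrlr /=.
by apply: eq_bigr => w1 _; apply: eq_bigr => w2 _; ring.
Qed.

Lemma actS_yzmx (g : 'M[K]_d) : actS n g *m yzmx = yzmx *m actT n g.
Proof. by apply/matrixP => i k; rewrite actS_yzmxE yzmx_actTE. Qed.

End YZMatrix.

Theorem lemma3p1 (K : fieldType) (d : nat) :
  [pchar K] =i pred0 -> (1 <= d)%N ->
  forall n : nat,
    (exists A : 'M[K]_(NS d n, NT d n),
        [/\ (kermx A == IdealB K d n)%MS, row_full A &
            forall i j, mdeg_tree d (sqt i) != mdeg_pair d (pt j) -> A i j = 0])
    /\
    (exists A : 'M[K]_(NS d n, NT d n),
        [/\ (kermx A == IdealB K d n)%MS, row_full A &
            forall g : 'M[K]_d, g \in unitmx -> actS n g *m A = A *m actT n g]).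
Proof.
move=> _ _ n; split; exists (yzmx K d n); split.
- exact: kermx_yzmx.
- exact: row_full_yzmx.
- exact: yzmx_mdeg.
- exact: kermx_yzmx.
- exact: row_full_yzmx.
- by move=> g _; apply: actS_yzmx.
Qed.
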